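(* Let $M$ be a matroid on $[n]$ and $\preceq$ a term order on $\mathbb{R}[x_1,\dots,x_n]$. Then $\mathcal{S}_\preceq(M)=\mathcal{S}_\preceq(M^* )$, where $M^*$ is the dual matroid.
   Context: The basis configuration of $M$ is $V_M=\{\mathbf{e}_B:B \text{ a basis of } M\}\subseteq\{0,1\}^n$ ($\mathbf{e}_B$ the characteristic vector of $B$). $\mathcal{S}_\preceq(M)=\{\tau\subseteq[n]:\prod_{i\in\tau}x_i\notin\mathrm{in}_\preceq(I(V_M))\}$, where $I(V_M)$ is the vanishing ideal of $V_M$ and $\mathrm{in}_\preceq$ denotes the initial ideal. $M^*$ has bases $\{[n]\setminus B: B \text{ a basis of } M\}$. *)

From mathcomp Require Import all_boot all_algebra.
From mathcomp Require Import reals.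
From mathcomp Require Import mpoly.

Set Implicit Arguments.
Unset Strict Implicit.
Unset Printing Implicit Defensive.

Import GRing.Theory.
Local Open Scope ring_scope.

Definition matroid_bases (n : nat) (BB : {set {set 'I_n}}) : Prop :=
  BB != set0 /\
  forall B1 B2, B1 \in BB -> B2 \in BB ->
    forall x, x \in B1 :\: B2 ->
      exists2 y, y \in B2 :\: B1 & (y |: (B1 :\ x)) \in BB.

Definition dual_bases (n : nat) (BB : {set {set 'I_n}}) : {set {set 'I_n}} :=
  [set ~: B | B in BB].

(* Monomials are exponent vectors 'X_{1..n}; le a b means x^a <= x^b. *)
Definition term_order (n : nat) (le : rel 'X_{1..n}) : Prop :=
  [/\ reflexive le, antisymmetric le, transitive le & total le] /\
  (forall a, le 0%MM a) /\
  (forall a b c, le a b -> le (a + c)%MM (b + c)%MM).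

Definition lead_monom (R : realType) (n : nat) (le : rel 'X_{1..n})
    (f : {mpoly R[n]}) (m : 'X_{1..n}) : Prop :=
  m \in msupp f /\ forall m', m' \in msupp f -> le m' m.

Definition ideal_gen (R : realType) (n : nat) (S : {mpoly R[n]} -> Prop)
    (g : {mpoly R[n]}) : Prop :=
  exists s : seq ({mpoly R[n]} * {mpoly R[n]}),
    (forall p, p \in s -> S p.2) /\ g = \sum_(p <- s) p.1 * p.2.

Definition vanishing_ideal (R : realType) (n : nat) (V : ('I_n -> R) -> Prop)
    (f : {mpoly R[n]}) : Prop :=
  forall v, V v -> f.@[v] = 0.

Definition initial_ideal (R : realType) (n : nat) (le : rel 'X_{1..n})
    (I : {mpoly R[n]} -> Prop) : {mpoly R[n]} -> Prop :=
  ideal_gen (fun g => exists f m, [/\ I f, f != 0, lead_monom le f m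
                                     & g = 'X_[m]]).

Definition char_vec (R : realType) (n : nat) (B : {set 'I_n}) : 'I_n -> R :=
  fun i => if i \in B then 1 else 0.

Definition basis_config (R : realType) (n : nat) (BB : {set {set 'I_n}})
    : ('I_n -> R) -> Prop :=
  fun v => exists2 B, B \in BB & v = @char_vec R n B.

Definition sqfree_monom (n : nat) (tau : {set 'I_n}) : 'X_{1..n} :=
  [multinom (i \in tau : nat) | i < n].

Definition S_set (R : realType) (n : nat) (le : rel 'X_{1..n})
    (BB : {set {set 'I_n}}) (tau : {set 'I_n}) : Prop :=
  ~ initial_ideal le (vanishing_ideal (@basis_config R n BB))
      ('X_[sqfree_monom tau] : {mpoly R[n]}).

(* On 0/1 points a monomial x^m agrees with the squarefree monomial on the
   support of m, so composing the multilinearisation of f with x_i |-> 1 - x_i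
   gives a polynomial g with g(e_B) = f(e_{[n] \ B}); thus g vanishes on V_{M*}
   whenever f vanishes on V_M.  If the leading monomial x^T of f is squarefree,
   every monomial of g divides a monomial of f, hence lies below x^T, and x^T
   occurs in g only from the term x^T of f, with coefficient (-1)^|T| times the
   leading coefficient.  So every squarefree leading monomial of I(V_M) is one
   of I(V_{M*}), and a squarefree monomial lies in an initial ideal exactly
   when it is divisible by such a leading monomial, which must then be
   squarefree too.  Symmetry follows from M** = M. *)

From mathcomp Require Import all_boot all_algebra.
From mathcomp Require Import reals.
From mathcomp Require Import mpoly.

Set Implicit Arguments.
Unset Strict Implicit.
Unset Printing Implicit Defensive.

Import GRing.Theory.
Local Open Scope ring_scope.

Lemma sum_neq0_has (V : nmodType) (I : eqType) (r : seq I) (P : pred I)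
    (F : I -> V) :
  \sum_(i <- r | P i) F i != 0 -> has (fun i => P i && (F i != 0)) r.
Proof.
apply: contraNT => /hasPn F0; rewrite big_seq_cond big1 // => i /andP[ir Pi].
by apply/eqP; move: (F0 i ir); rewrite Pi negbK.
Qed.

Section SquarefreeMonomials.

Variable n : nat.
Implicit Types (J K : {set 'I_n}) (m : 'X_{1..n}).

Definition mnm_support m : {set 'I_n} := [set i | m i != 0%N].

Lemma sqfree_monomE J i : sqfree_monom J i = (i \in J).
Proof. by rewrite mnmE. Qed.

Lemma sqfree_monom_inj : injective (@sqfree_monom n).
Proof.
move=> J K /mnmP eqJK; apply/setP => i.
by move: (eqJK i); rewrite !sqfree_monomE; case: (i \in J); case: (i \in K).
Qed.

Lemma mnm_support_sqfree J : mnm_support (sqfree_monom J) = J.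
Proof. by apply/setP => i; rewrite inE sqfree_monomE; case: (i \in J). Qed.

Lemma lem_sqfree_monom J m :
  (sqfree_monom J <= m)%MM = (J \subset mnm_support m).
Proof.
apply/mnm_lepP/subsetP => [le_Jm i iJ | sub i].
  by rewrite inE -lt0n; move: (le_Jm i); rewrite sqfree_monomE iJ.
by rewrite sqfree_monomE; case: (boolP (i \in J)) => // /sub; rewrite inE lt0n.
Qed.

Lemma lem_sqfree_monomP m J :
  (m <= sqfree_monom J)%MM -> m = sqfree_monom (mnm_support m).
Proof.
move/mnm_lepP => le_mJ; apply/mnmP => i; rewrite sqfree_monomE inE.
by move: (le_mJ i); rewrite sqfree_monomE; case: (i \in J); case: (m i) => [|[]].
Qed.

End SquarefreeMonomials.

Lemma term_order_lem (n : nat) (le : rel 'X_{1..n}) (a b : 'X_{1..n}) :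
  term_order le -> (a <= b)%MM -> le a b.
Proof.
move=> [_ [le0 leD]] le_ab; rewrite -(submK le_ab).
by have := leD 0%MM (b - a)%MM a (le0 _); rewrite add0m.
Qed.

Lemma mcoeff_mulX_neq0 (R : nzRingType) (n : nat) (p : {mpoly R[n]}) m t :
  (p * 'X_[m])@_t != 0 -> (m <= t)%MM.
Proof.
by rewrite -mcoeff_msupp (perm_mem (msuppMX p m)) => /mapP[m' _ ->]; apply: lem_addr.
Qed.

Section MonomialInitialIdeal.

Variables (R : realType) (n : nat).
Implicit Types (S I : {mpoly R[n]} -> Prop) (g h p : {mpoly R[n]}).

Lemma ideal_gen_mcoeff_neq0 S g t :
  ideal_gen S g -> g@_t != 0 -> exists2 hp, S hp.2 & (hp.1 * hp.2)@_t != 0.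
Proof.
move=> [s [Ss ->]]; rewrite raddf_sum => /sum_neq0_has/hasP[hp hp_s nz].
by exists hp; [apply: Ss | rewrite /= in nz].
Qed.

Lemma ideal_gen_mul S h p : S p -> ideal_gen S (h * p).
Proof.
by move=> Sp; exists [:: (h, p)]; split => [q|]; rewrite ?big_seq1 // mem_seq1 => /eqP ->.
Qed.

Lemma initial_idealXP (le : rel 'X_{1..n}) I t :
  initial_ideal le I 'X_[t] <->
  exists f m, [/\ I f, f != 0, lead_monom le f m & (m <= t)%MM].
Proof.
split=> [gen_t | [f [m [If f_neq0 lead_fm le_mt]]]].
  have Xt_t : ('X_[t] : {mpoly R[n]})@_t != 0 by rewrite mcoeffX eqxx oner_neq0.
  have [[h g] [f [m [If f_neq0 lead_fm ->]]] nz] := ideal_gen_mcoeff_neq0 gen_t Xt_t.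
  by exists f, m; split => //; apply: mcoeff_mulX_neq0 nz.
rewrite -(submK le_mt) mpolyXD; apply: ideal_gen_mul.
by exists f, m.
Qed.

End MonomialInitialIdeal.

Section ComplementSubstitution.

Variables (R : comNzRingType) (n : nat).
Implicit Types (J : {set 'I_n}) (m t : 'X_{1..n}) (f : {mpoly R[n]}).

Definition mcompl_monom m : {mpoly R[n]} := \prod_(i | m i != 0%N) (1 - 'X_i).

Definition mcompl f : {mpoly R[n]} := \sum_(m <- msupp f) f@_m *: mcompl_monom m.

Lemma mpolyX_sqfree J : 'X_[sqfree_monom J] = \prod_(i in J) 'X_i :> {mpoly R[n]}.
Proof.
rewrite mpolyXE_id [RHS]big_mkcond; apply: eq_bigr => i _.
by rewrite sqfree_monomE; case: (i \in J).
Qed.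

Lemma mcompl_monomE m :
  mcompl_monom m =
  \sum_(J : {set 'I_n} | J \subset mnm_support m) (-1) ^+ #|J| *: 'X_[sqfree_monom J].
Proof.
pose F i : {mpoly R[n]} := if m i != 0%N then - 'X_i else 0.
have -> : mcompl_monom m = \prod_i (F i + 1).
  rewrite /mcompl_monom big_mkcond /=; apply: eq_bigr => i _.
  by rewrite /F; case: ifP; rewrite ?add0r // addrC.
rewrite bigA_distr [RHS]big_mkcond /=; apply: eq_bigr => J _.
case: (boolP (J \subset mnm_support m)) => [/subsetP sub | /subsetPn[i iJ]]; last first.
  by rewrite inE negbK => /eqP mi0; rewrite (bigD1 i) //= iJ /F mi0 mul0r.
rewrite mpolyX_sqfree -mul_mpolyC rmorph_sign -prodrN -big_mkcond /=.
by apply: eq_bigr => i /sub; rewrite inE /F => ->.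
Qed.

Lemma mcoeff_mcompl_monom_sqfree m J :
  (mcompl_monom m)@_(sqfree_monom J) =
  if J \subset mnm_support m then (-1) ^+ #|J| else 0.
Proof.
rewrite mcompl_monomE raddf_sum /=.
under eq_bigr do rewrite mcoeffZ mcoeffX (inj_eq (@sqfree_monom_inj n)) mulr_natr mulrb.
rewrite -big_mkcondr /=; case: ifP => sub; last first.
  by rewrite big_pred0 // => K; case: eqP => [->|]; rewrite ?sub ?andbF.
by rewrite (eq_bigl (pred1 J)) ?big_pred1_eq // => K; rewrite andb_idl // => /eqP ->.
Qed.

Lemma mcoeff_mcompl_monom_neq0 m t : (mcompl_monom m)@_t != 0 -> (t <= m)%MM.
Proof.
rewrite mcompl_monomE raddf_sum => /sum_neq0_has/hasP[J _ /andP[sub]].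
rewrite /= mcoeffZ mcoeffX; case: (sqfree_monom J =P t) => [<- _|_].
  by rewrite lem_sqfree_monom.
by rewrite mulr0 eqxx.
Qed.

Lemma mcoeff_mcompl f t :
  (mcompl f)@_t = \sum_(m <- msupp f) f@_m * (mcompl_monom m)@_t.
Proof. by rewrite raddf_sum; apply: eq_bigr => m _; rewrite /= mcoeffZ. Qed.

End ComplementSubstitution.

Section EvaluationAtBases.

Variables (R : realType) (n : nat).
Implicit Types (B : {set 'I_n}) (m : 'X_{1..n}) (f : {mpoly R[n]}).

Lemma char_vecC B i : 1 - char_vec R B i = char_vec R (~: B) i.
Proof. by rewrite /char_vec inE; case: (i \in B); rewrite ?subrr ?subr0. Qed.

Lemma meval_mcompl_monom m B :
  (mcompl_monom R m).@[char_vec R B] =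
  ('X_[m] : {mpoly R[n]}).@[char_vec R (~: B)].
Proof.
rewrite mevalX rmorph_prod big_mkcond /=; apply: eq_bigr => i _.
rewrite mevalB meval1 mevalXU char_vecC /char_vec.
by case: (m i) => [|k]; case: (_ \in _); rewrite ?expr1n ?expr0n.
Qed.

Lemma meval_mcompl f B : (mcompl f).@[char_vec R B] = f.@[char_vec R (~: B)].
Proof.
rewrite [RHS]mevalE raddf_sum; apply: eq_bigr => m _.
by rewrite /= mevalZ meval_mcompl_monom mevalX.
Qed.

End EvaluationAtBases.

Section LeadingMonomial.

Variables (R : realType) (n : nat) (le : rel 'X_{1..n}).
Hypothesis le_order : term_order le.

Lemma mcoeff_mcompl_neq0 (f : {mpoly R[n]}) t :
  (mcompl f)@_t != 0 -> exists2 m, m \in msupp f & (t <= m)%MM.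
Proof.
rewrite mcoeff_mcompl => /sum_neq0_has/hasP[m mf /=].
by rewrite mulf_eq0 negb_or => /andP[_ /mcoeff_mcompl_monom_neq0]; exists m.
Qed.

Lemma lead_monom_mcompl (f : {mpoly R[n]}) T :
  lead_monom le f (sqfree_monom T) -> lead_monom le (mcompl f) (sqfree_monom T).
Proof.
have [[_ le_anti le_trans _] _] := le_order.
move=> [fT f_max]; split => [|t]; last first.
  rewrite mcoeff_msupp => /mcoeff_mcompl_neq0[m mf le_tm].
  by apply: (le_trans m); [apply: term_order_lem | apply: f_max].
rewrite mcoeff_msupp mcoeff_mcompl (bigD1_seq _ fT (msupp_uniq f)) /=.
rewrite big1_seq => [|m /andP[m_neq_T mf]].
  rewrite addr0 mcoeff_mcompl_monom_sqfree mnm_support_sqfree subxx.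
  by rewrite mulf_neq0 ?signr_eq0 // -mcoeff_msupp.
suff -> : (mcompl_monom R m)@_(sqfree_monom T) = 0 by rewrite mulr0.
apply/eqP; move: m_neq_T; apply: contraNT.
move=> /mcoeff_mcompl_monom_neq0 /(term_order_lem le_order) le_Tm.
by apply/eqP/le_anti; rewrite f_max.
Qed.

End LeadingMonomial.

Lemma dual_basesK (n : nat) : involutive (@dual_bases n).
Proof. by move=> BB; rewrite /dual_bases -imset_comp (eq_imset _ setCK) imset_id. Qed.

Lemma initial_ideal_dual_bases (R : realType) (n : nat) (le : rel 'X_{1..n})
    (BB : {set {set 'I_n}}) (tau : {set 'I_n}) :
  term_order le ->
  initial_ideal le (vanishing_ideal (@basis_config R n BB)) 'X_[sqfree_monom tau] ->
  initial_ideal le (vanishing_ideal (@basis_config R n (dual_bases BB)))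
    'X_[sqfree_monom tau].
Proof.
move=> le_order /initial_idealXP[f [m [If f_neq0 lead_fm le_m_tau]]].
have [T m_sqfree] : exists T, m = sqfree_monom T.
  by exists (mnm_support m); apply: lem_sqfree_monomP le_m_tau.
rewrite {m}m_sqfree in lead_fm le_m_tau *.
have lead_mcompl := lead_monom_mcompl le_order lead_fm.
apply/initial_idealXP; exists (mcompl f), (sqfree_monom T); split => //.
  by move=> _ [_ /imsetP[B BB_B ->] ->]; rewrite meval_mcompl setCK; apply: If; exists B.
by apply: contraTneq lead_mcompl.1 => ->; rewrite msupp0.
Qed.

Theorem proposition2p6 (R : realType) (n : nat) (BB : {set {set 'I_n}})
    (le : rel 'X_{1..n}) :
  matroid_bases BB -> term_order le ->
  forall tau : {set 'I_n}, S_set R le BB tau <-> S_set R le (dual_bases BB) tau.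
Proof.
move=> _ le_order tau; split; apply: contra_not; last exact: initial_ideal_dual_bases.
by rewrite -{2}(dual_basesK BB); apply: initial_ideal_dual_bases.
Qed.
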